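(* Let $p$ be a prime and $\alpha$ a positive integer. For $l\in\mathbb{N}$, $n\in\mathbb{N}$, $r\in\mathbb{Z}$ let $$T_l(n,r)=\frac{l!\,p^l}{\lfloor n/p^{\alpha-1}\rfloor!}\sum_{k\equiv r\ (\mathrm{mod}\ p^{\alpha})}\binom nk(-1)^k\binom{(k-r)/p^{\alpha}}l.$$ Let $l\in\mathbb{N}$, $n\in\mathbb{Z}^+$ and $r\in\mathbb{Z}$. Then $$T_l(n-1,r)-T_l(n-1,r-1)=\begin{cases}T_l(n,r)&\text{if } p^{\alpha-1}\nmid n,\\ \frac n{p^{\alpha-1}}T_l(n,r)&\text{otherwise}.\end{cases}$$ If $l>0$, then also $$T_l(n,r)+\frac r{p^{\alpha-1}}T_{l-1}(n,r+p^{\alpha})=\begin{cases}-T_{l-1}(n-1,r+p^{\alpha}-1)&\text{if } p^{\alpha-1}\mid n,\\ -\frac n{p^{\alpha-1}}T_{l-1}(n-1,r+p^{\alpha}-1)&\text{otherwise}.\end{cases}$$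
   Context: The sum runs over all integers $k\equiv r\pmod{p^\alpha}$ with $\binom nk=0$ unless $0\le k\le n$; $\binom xl=x(x-1)\cdots(x-l+1)/l!$. *)

From mathcomp Require Import all_boot all_order all_algebra.
Set Implicit Arguments. Unset Strict Implicit. Unset Printing Implicit Defensive.
Import Order.TTheory GRing.Theory Num.Theory.
Local Open Scope ring_scope.

Definition binz (x : int) (l : nat) : rat :=
  (\prod_(i < l) (x%:~R - (i%:R : rat))) / (l`!)%:R.

(* T_l(n,r) for prime p and exponent alpha; the sum over k = r (mod p^alpha)
   is restricted to 0 <= k <= n since binom n k = 0 otherwise. *)
Definition T (p alpha : nat) (l n : nat) (r : int) : rat :=
  ((l`! * p ^ l)%:R / ((n %/ p ^ alpha.-1)`!)%:R) *
  \sum_(0 <= k < n.+1 | ((k%:Z - r) %% (p ^ alpha)%:Z)%Z == 0%Z)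
     ('C(n, k)%:R * (-1) ^+ k * binz ((k%:Z - r) %/ (p ^ alpha)%:Z)%Z l).

From mathcomp Require Import all_boot all_order all_algebra.
From mathcomp Require Import ring zify.
Import Order.TTheory GRing.Theory Num.Theory.
Local Open Scope ring_scope.

(* Write m = p^alpha, q = p^(alpha-1), and T_l(n, r) = l! p^l / (n %/ q)! * S_l(n, r)
   with S_l(n, r) the alternating binomial sum over the residue class of r mod m.
   Pascal's rule gives S_l(n, r) - S_l(n, r - 1) = S_l(n + 1, r).  Absorbing on both
   binomials, k C(n + 1, k) = (n + 1) C(n, k - 1) and (l + 1) C(x, l + 1) = x C(x - 1, l)
   with k = r + m x, gives
     (l + 1) m S_(l+1)(n + 1, r) + r S_l(n + 1, r + m) = - (n + 1) S_l(n, r + m - 1).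
   Finally (n + 1) %/ q = n %/ q + [q | n + 1], so the normalising factorials of
   T(n + 1, _) and T(n, _) differ by the factor (n + 1)/q exactly when q | n + 1. *)

Lemma binz_absorption (x : int) (l : nat) :
  l.+1%:R * binz x l.+1 = x%:~R * binz (x - 1) l.
Proof.
rewrite /binz big_ord_recl factS natrM /=.
have -> : \prod_(i < l) (x%:~R - (bump 0 i)%:R : rat) =
          \prod_(i < l) ((x - 1)%:~R - i%:R).
  by apply: eq_bigr => i _; rewrite /bump /= add1n -natr1 intrD; ring.
have lfact_neq0 : l`!%:R != 0 :> rat by rewrite pnatr_eq0 -lt0n fact_gt0.
field; by rewrite lfact_neq0 nat1r pnatr_eq0.
Qed.

Section ResidueClassSum.

Variable m : nat.

Definition resid_term (l n : nat) (r : int) (k : nat) : rat :=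
  if ((k%:Z - r) %% m%:Z)%Z == 0%Z then
    'C(n, k)%:R * (-1) ^+ k * binz ((k%:Z - r) %/ m%:Z)%Z l
  else 0.

Definition resid_sum (l n : nat) (r : int) : rat :=
  \sum_(0 <= k < n.+1) resid_term l n r k.

Lemma resid_sum_widen l n r N : (n < N)%N ->
  resid_sum l n r = \sum_(0 <= k < N) resid_term l n r k.
Proof.
move=> n_lt_N; rewrite /resid_sum [RHS](big_cat_nat _ (n := n.+1)) //=.
rewrite [X in _ = _ + X]big1_seq ?addr0 // => k /andP[_].
rewrite mem_index_iota => /andP[n_lt_k _].
by rewrite /resid_term bin_small //; case: ifP; rewrite ?mul0r.
Qed.

Lemma resid_term_pascal l n r k :
  resid_term l n.+1 r k.+1 = resid_term l n r k.+1 - resid_term l n (r - 1) k.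
Proof.
have shift : (k.+1%:Z - r = k%:Z - (r - 1))%R by lia.
rewrite /resid_term shift; case: ifP => _; last by rewrite subr0.
by rewrite binS natrD exprS; ring.
Qed.

Lemma resid_sum_pascal l n r :
  resid_sum l n.+1 r = resid_sum l n r - resid_sum l n (r - 1).
Proof.
rewrite (@resid_sum_widen l n r n.+2) // /resid_sum.
rewrite [LHS]big_nat_recl // [in X in _ = X - _]big_nat_recl // -addrA -sumrB.
congr (_ + _); first by rewrite /resid_term !bin0.
by apply: eq_bigr => k _; rewrite resid_term_pascal.
Qed.

Hypothesis m_gt0 : (0 < m)%N.

(* Writing k = r + m x, both sides are (r + m x) C(n, k) (-1)^k C(x - 1, l). *)
Lemma resid_term_absorption l n r k :
  (l.+1 * m)%:R * resid_term l.+1 n r k + r%:~R * resid_term l n (r + m%:Z) k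
  = k%:R * resid_term l n (r + m%:Z) k.
Proof.
have m_neq0 : m%:Z != 0 by lia.
have shift : (k%:Z - (r + m%:Z) = (-1) * m%:Z + (k%:Z - r))%R by ring.
rewrite /resid_term shift modzMDl divzMDl //.
case: ifP => [/eqP/dvdz_mod0P m_dvd | _]; last by rewrite !mulr0 addr0.
set x := ((k%:Z - r) %/ m%:Z)%Z.
have k_eq : k%:R = r%:~R + x%:~R * m%:R :> rat.
  by rewrite -[m%:R]/(m%:Z%:~R) -intrM divzK // intrB addrC subrK.
set c := 'C(n, k)%:R * (-1) ^+ k.
have -> : (l.+1 * m)%:R * (c * binz x l.+1) = m%:R * c * (l.+1%:R * binz x l.+1).
  by rewrite natrM; ring.
by rewrite binz_absorption k_eq (addrC (-1) x); ring.
Qed.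

Lemma resid_term_shift l n r k :
  k.+1%:R * resid_term l n.+1 (r + m%:Z) k.+1
  = - n.+1%:R * resid_term l n (r + m%:Z - 1) k.
Proof.
have shift : (k.+1%:Z - (r + m%:Z) = k%:Z - (r + m%:Z - 1))%R by lia.
rewrite /resid_term shift; case: ifP => _; last by rewrite !mulr0.
have := congr1 (fun t => t%:R : rat) (mul_bin_diag n.+1 k).
by rewrite /= !natrM exprS mulN1r => absorb; rewrite !mulrA -absorb; ring.
Qed.

Lemma resid_sum_absorption l n r :
  (l.+1 * m)%:R * resid_sum l.+1 n.+1 r + r%:~R * resid_sum l n.+1 (r + m%:Z)
  = - n.+1%:R * resid_sum l n (r + m%:Z - 1).
Proof.
rewrite /resid_sum !mulr_sumr -big_split /=.
under eq_bigr do rewrite resid_term_absorption.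
rewrite big_nat_recl // mul0r add0r.
by apply: eq_bigr => k _; rewrite resid_term_shift.
Qed.

End ResidueClassSum.

Lemma T_resid_sum p alpha l n r : T p alpha l n r =
  (l`! * p ^ l)%:R / ((n %/ p ^ alpha.-1)`!)%:R * resid_sum (p ^ alpha) l n r.
Proof. by rewrite /T /resid_sum /resid_term big_mkcond. Qed.

Lemma natr_fact_divS q n : (0 < q)%N ->
  ((n.+1 %/ q)`!)%:R =
    (if (q %| n.+1)%N then n.+1%:R / q%:R else 1) * ((n %/ q)`!)%:R :> rat.
Proof.
move=> q_gt0; rewrite divnS //; case: ifP => q_dvd /=; last by rewrite mul1r.
by rewrite add1n factS natrM -natf_div // divnS // q_dvd.
Qed.

Theorem lemma2p2 (p alpha : nat) (hp : prime p) (ha : (0 < alpha)%N)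
  (l n : nat) (hn : (0 < n)%N) (r : int) :
  (T p alpha l n.-1 r - T p alpha l n.-1 (r - 1) =
     if ~~ (p ^ alpha.-1 %| n)%N then T p alpha l n r
     else (n%:R / (p ^ alpha.-1)%:R) * T p alpha l n r)
  /\
  ((0 < l)%N ->
   T p alpha l n r + (r%:~R / (p ^ alpha.-1)%:R) * T p alpha l.-1 n (r + (p ^ alpha)%:Z) =
     if (p ^ alpha.-1 %| n)%N then - T p alpha l.-1 n.-1 (r + (p ^ alpha)%:Z - 1)
     else - ((n%:R / (p ^ alpha.-1)%:R) * T p alpha l.-1 n.-1 (r + (p ^ alpha)%:Z - 1))).
Proof.
set q := (p ^ alpha.-1)%N; set m := (p ^ alpha)%N.
have p_gt0 : (0 < p)%N := prime_gt0 hp.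
have q_gt0 : (0 < q)%N by rewrite expn_gt0 p_gt0.
have m_gt0 : (0 < m)%N by rewrite expn_gt0 p_gt0.
have m_eq : m = (p * q)%N by rewrite -expnS prednK.
case: n hn => [//|n] _ /=.
rewrite !T_resid_sum -/q -/m natr_fact_divS //.
have fact_neq0 : ((n %/ q)`!)%:R != 0 :> rat by rewrite pnatr_eq0 -lt0n fact_gt0.
have q_neq0 : q%:R != 0 :> rat by rewrite pnatr_eq0 -lt0n.
have n1_neq0 : n.+1%:R != 0 :> rat by rewrite pnatr_eq0.
split.
  rewrite -mulrBr -resid_sum_pascal.
  by case: (q %| n.+1)%N; field; rewrite ?nat1r ?q_neq0 ?fact_neq0 ?n1_neq0.
case: l => [//|l] _ /=.
have := @resid_sum_absorption m m_gt0 l n r.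
set S1 := resid_sum m l.+1 _ _; set S2 := resid_sum m l _ _; set S3 := resid_sum m l n _.
move=> absorb; have -> : S3 = - n.+1%:R^-1 * ((l.+1 * m)%:R * S1 + r%:~R * S2).
  by rewrite absorb !mulNr mulrN opprK mulKf.
have lfact_neq0 : l`!%:R != 0 :> rat by rewrite pnatr_eq0 -lt0n fact_gt0.
rewrite m_eq factS expnS !natrM.
by case: (q %| n.+1)%N; field; rewrite ?nat1r ?q_neq0 ?fact_neq0 ?n1_neq0 ?lfact_neq0.
Qed.
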